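(* For all admissible $n,k$: if the defender has a winning strategy in $n\text{-}\Gamma_{k}^{\langle a/d,a/d\rangle}$, then it has a winning strategy in $n\text{-}\Gamma_{k}^{\langle a/d_1,a/d_2\rangle,(Z_A,\le)}$; consequently it has a winning strategy in $n\text{-}\Gamma_{k}^{\langle a/d_1,a/d_2\rangle,(Z_A,\le)}$ or in $n\text{-}\Gamma_{k}^{\langle a/d_1,a/d_2\rangle,(Z_B,\le)}$.
   Context: Games are played between a challenger and a defender on the zone graphs $Z_A$, $Z_B$ of two timed automata $A,B$ (i.e. on timed states lying in their nodes), starting from a pair of states. In each round the challenger chooses one graph and moves there; the defender answers on the other; play continues from the resulting pair. An alternation is a change of graph by the challenger between consecutive rounds; $n\text{-}\Gamma_k$ allows at most $n$ alternations and $k$ rounds ($k\in\mathbb{N}\cup\{\infty\}$, $n\le k-1$ if $k\ne\infty$). The defender wins if it can always answer. cp-delays: with $C$ the maximal constant of $A,B$, delays $n$, $n\pm\delta$ ($n\in\{0,\dots,C\}$, $\delta$ symbolic infinitesimal), and if some clock $y$ has non-zero fractional part, $f$, $f\pm\delta$ with $f=1-\mathrm{frac}(v(y))$. In the zone graph, $\mathcal{N}(p)$ is the node containing state $p$, and $\varepsilon$-edges lead to delay successor zones. $\Gamma^{\langle a/d,a/d\rangle}$ (cp-bisimulation game): the challenger performs a visible action $a$, or the maximal delay keeping its state within its current node, or the minimal delay reaching a different delay-successor node; the defender must answer with the same action $a$, resp. exactly the same delay $d$. $\Gamma^{\langle a/d_1,a/d_2\rangle,(Z_A,\le)}$ (cp-prebisimulation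 game): visible actions must be matched by the same action; delays need not be equal, subject to delays in $Z_A$ being at most the corresponding delays in $Z_B$. Precisely: challenger in $Z_A$ doing maximal delay $d$ within the node: defender delays $d$; challenger in $Z_A$ doing minimal delay $d$ to the next zone: defender delays $d$ or a cp-delay $d'\ge d$ into a delay successor zone; challenger in $Z_B$ doing maximal delay $d$ within the node: defender delays $d$ or a cp-delay $d'\le d$ reaching the end of the same or another delay successor zone; challenger in $Z_B$ doing minimal delay $d$ to the next zone: defender delays $d$, or a cp-delay $d'\le d$ reaching the beginning of a delay successor zone, or a cp-delay $d'\le d$ reaching the end of the same or another delay successor zone. $(Z_B,\le)$ is the same with the roles of $Z_A$ and $Z_B$ exchanged. *)

From Stdlib Require Import Reals Lra Lia ZArith List.
Open Scope R_scope.

(* Time domain with a symbolic (first-order) infinitesimal delta.     *)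
(* mkT r k  denotes  r + k*delta ; order is lexicographic.            *)
Record time := mkT { tre : R; tinf : Z }.

Definition tle (a b : time) : Prop :=
  tre a < tre b \/ (tre a = tre b /\ (tinf a <= tinf b)%Z).
Definition tlt (a b : time) : Prop := tle a b /\ a <> b.
Definition tadd (a b : time) : time := mkT (tre a + tre b) (tinf a + tinf b).
Definition tsub (a b : time) : time := mkT (tre a - tre b) (tinf a - tinf b).
Definition tzero : time := mkT 0 0.
Definition tnat (n : nat) : time := mkT (INR n) 0.
Definition tint (z : Z) : time := mkT (IZR z) 0.

Inductive cmp := CLt | CLe | CEq | CGe | CGt.

Definition cmp_sem (o : cmp) (a b : time) : Prop :=
  match o with
  | CLt => tlt a b
  | CLe => tle a b
  | CEq => a = b
  | CGe => tle b a
  | CGt => tlt b a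
  end.

Definition gatom (X : Type) : Type := (X * cmp * nat)%type.
Definition guard (X : Type) : Type := list (gatom X).

Definition sat {X : Type} (v : X -> time) (g : guard X) : Prop :=
  Forall (fun at_ => match at_ with (x, o, c) => cmp_sem o (v x) (tnat c) end) g.

Inductive zconstr (X : Type) :=
  | ZAtom (x : X) (o : cmp) (c : Z)
  | ZDiag (x y : X) (o : cmp) (c : Z).
Arguments ZAtom {X}. Arguments ZDiag {X}.

Definition zsat {X : Type} (v : X -> time) (z : list (zconstr X)) : Prop :=
  Forall (fun zc => match zc with
                    | ZAtom x o c => cmp_sem o (v x) (tint c)
                    | ZDiag x y o c => cmp_sem o (tsub (v x) (v y)) (tint c)
                    end) z.

Record TA (Act : Type) := mkTA {
  Loc : Type;
  locs : list Loc;
  locs_all : forall l : Loc, In l locs;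
  Clk : Type;
  clocks : list Clk;
  clocks_all : forall x : Clk, In x clocks;
  (* edges (source, guard, action, reset set, target) *)
  edges : list (Loc * guard Clk * Act * list Clk * Loc);
  inv : Loc -> guard Clk
}.
Arguments Loc {Act}. Arguments locs {Act}. Arguments Clk {Act}.
Arguments clocks {Act}. Arguments edges {Act}. Arguments inv {Act}.

Definition gmax {X : Type} (g : guard X) : nat :=
  fold_right (fun at_ m => match at_ with (_, _, c) => Nat.max c m end) 0%nat g.

Definition maxconst {Act : Type} (A : TA Act) : nat :=
  Nat.max
    (fold_right (fun e m => match e with (_, g, _, _, _) => Nat.max (gmax g) m end)
                0%nat (edges A))
    (fold_right (fun l m => Nat.max (gmax (inv A l)) m) 0%nat (locs A)).

Definition state {Act : Type} (A : TA Act) : Type := (Loc A * (Clk A -> time))%type.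

Definition shift {Act : Type} {A : TA Act} (p : state A) (d : time) : state A :=
  (fst p, fun x => tadd (snd p x) d).

Definition reset {X : Type} (R : list X) (v v' : X -> time) : Prop :=
  forall x, (In x R -> v' x = tzero) /\ (~ In x R -> v' x = v x).

Definition act_step {Act : Type} (A : TA Act) (a : Act) (p p' : state A) : Prop :=
  exists g R, In (fst p, g, a, R, fst p') (edges A) /\ sat (snd p) g /\
              reset R (snd p) (snd p') /\ sat (snd p') (inv A (fst p')).

Definition delay_step {Act : Type} (A : TA Act) (d : time) (p p' : state A) : Prop :=
  tle tzero d /\ p' = shift p d /\
  forall d', tle tzero d' -> tle d' d -> sat (snd (shift p d')) (inv A (fst p)).

(* Zone graph of a timed automaton: a partition of the timed states   *)
(* into nodes (location, zone);  N(p) = node p.                        *)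
Record zone_graph {Act : Type} (A : TA Act) := mkZG {
  Node : Type;
  node : state A -> Node;
  node_loc : Node -> Loc A;
  node_zone : Node -> list (zconstr (Clk A));
  node_spec : forall (p : state A) (m : Node),
      node p = m <-> (fst p = node_loc m /\ zsat (snd p) (node_zone m))
}.
Arguments node {Act A}.

Section Moves.
Context {Act : Type} {A : TA Act} (Z : zone_graph A).

Definition stays (p : state A) (d : time) : Prop :=
  forall d', tle tzero d' -> tle d' d -> node Z (shift p d') = node Z p.

Definition is_max_delay (p : state A) (d : time) : Prop :=
  (exists p', delay_step A d p p') /\ stays p d /\
  forall d'', (exists p'', delay_step A d'' p p'') -> stays p d'' -> tle d'' d.

Definition is_min_next (p : state A) (d : time) : Prop :=
  (exists p', delay_step A d p p') /\ node Z (shift p d) <> node Z p /\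
  forall d'', (exists p'', delay_step A d'' p p'') ->
              node Z (shift p d'') <> node Z p -> tle d d''.

Definition at_begin (q : state A) (d' : time) : Prop :=
  forall d'', tle tzero d'' -> tlt d'' d' -> node Z (shift q d'') <> node Z (shift q d').

Definition at_end (q' : state A) : Prop :=
  forall e, tlt tzero e -> node Z (shift q' e) <> node Z q'.
End Moves.

Definition cp_delay {X : Type} (C : nat) (v : X -> time) (d : time) : Prop :=
  (exists n : nat, (n <= C)%nat /\
     (d = mkT (INR n) 0 \/ d = mkT (INR n) 1 \/ d = mkT (INR n) (-1)))
  \/ (exists y : X, frac_part (tre (v y)) <> 0 /\
      let f := 1 - frac_part (tre (v y)) in
      (d = mkT f 0 \/ d = mkT f 1 \/ d = mkT f (-1))).

Inductive side := SA | SB.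

Definition side_eqb (s t : side) : bool :=
  match s, t with SA, SA | SB, SB => true | _, _ => false end.

Inductive ninf := Fin (n : nat) | Inf.

Inductive label (Act : Type) :=
  | LAct (a : Act)
  | LMax (d : time)
  | LMin (d : time).
Arguments LAct {Act}. Arguments LMax {Act}. Arguments LMin {Act}.

Definition chal_move {Act : Type} {A : TA Act} (Z : zone_graph A)
  (p : state A) (l : label Act) (p' : state A) : Prop :=
  match l with
  | LAct a => act_step A a p p'
  | LMax d => is_max_delay Z p d /\ delay_step A d p p'
  | LMin d => is_min_next Z p d /\ delay_step A d p p'
  end.

(* game variants: cp-bisimulation, or cp-prebisimulation (Z_s, <=) *)
Inductive mode := Bisim | Pre (s : side).

(* admissible defender answers; cs = side of the challenger's move,
   Z = zone graph of the defender, C = maximal constant of A and B *)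
Definition resp {Act : Type} {D : TA Act} (Z : zone_graph D) (C : nat)
  (m : mode) (cs : side) (l : label Act) (q q' : state D) : Prop :=
  match l with
  | LAct a => act_step D a q q'
  | LMax d =>
      match m with
      | Bisim => delay_step D d q q'
      | Pre s =>
          if side_eqb cs s then delay_step D d q q'
          else delay_step D d q q' \/
               (exists d', cp_delay C (snd q) d' /\ tle d' d /\
                           delay_step D d' q q' /\ at_end Z q')
      end
  | LMin d =>
      match m with
      | Bisim => delay_step D d q q'
      | Pre s =>
          if side_eqb cs s then
            delay_step D d q q' \/
            (exists d', cp_delay C (snd q) d' /\ tle d d' /\ delay_step D d' q q')
          else
            delay_step D d q q' \/
            (exists d', cp_delay C (snd q) d' /\ tle d' d /\
                        delay_step D d' q q' /\ at_begin Z q d') \/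
            (exists d', cp_delay C (snd q) d' /\ tle d' d /\
                        delay_step D d' q q' /\ at_end Z q')
      end
  end.

(* alternation budget: None if the challenger may not play on side s *)
Definition allowed (last : option side) (n : ninf) (s : side) : option ninf :=
  match last with
  | None => Some n
  | Some s' =>
      if side_eqb s s' then Some n
      else match n with
           | Inf => Some Inf
           | Fin 0 => None
           | Fin (S m) => Some (Fin m)
           end
  end.

Section Game.
Context {Act : Type} {A B : TA Act} (ZA : zone_graph A) (ZB : zone_graph B)
        (m : mode).

Definition Cmax : nat := Nat.max (maxconst A) (maxconst B).

Definition round (P : side -> state A -> state B -> ninf -> Prop)
  (n : ninf) (last : option side) (p : state A) (q : state B) : Prop :=
  (forall n', allowed last n SA = Some n' ->
     forall l p', chal_move ZA p l p' ->
       exists q', resp ZB Cmax m SA l q q' /\ P SA p' q' n') /\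
  (forall n', allowed last n SB = Some n' ->
     forall l q', chal_move ZB q l q' ->
       exists p', resp ZA Cmax m SB l p p' /\ P SB p' q' n').

Fixpoint winF (k : nat) (n : ninf) (last : option side)
  (p : state A) (q : state B) : Prop :=
  match k with
  | O => True
  | S k' => round (fun s p' q' n' => winF k' n' (Some s) p' q') n last p q
  end.

Definition winI (n : ninf) (p : state A) (q : state B) : Prop :=
  exists W : ninf -> option side -> state A -> state B -> Prop,
    W n None p q /\
    forall n' last p' q', W n' last p' q' ->
      round (fun s p'' q'' n'' => W n'' (Some s) p'' q'') n' last p' q'.

Definition defender_wins (n k : ninf) (p : state A) (q : state B) : Prop :=
  match k with
  | Fin k => winF k n None p q
  | Inf => winI n p q
  end.
End Game.

Definition admissible (n k : ninf) : Prop :=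
  match k with
  | Fin k => exists n0, n = Fin n0 /\ (n0 + 1 <= k)%nat
  | Inf => True
  end.


(* Every answer allowed in the cp-bisimulation game (the same action, resp.
   exactly the same delay) is also allowed in either cp-prebisimulation game,
   so a defender strategy for the former is one for the latter. *)

Lemma resp_Bisim_Pre {Act : Type} {D : TA Act} (Z : zone_graph D) C s cs l q q' :
  resp Z C Bisim cs l q q' -> resp Z C (Pre s) cs l q q'.
Proof.
  destruct l; simpl; auto; intro H; destruct (side_eqb cs s); auto.
Qed.

Section Strategies.
Context {Act : Type} {A B : TA Act} (ZA : zone_graph A) (ZB : zone_graph B) (s : side).

Lemma round_Bisim_Pre (P P' : side -> state A -> state B -> ninf -> Prop) n last p q :
  (forall cs p' q' n', P cs p' q' n' -> P' cs p' q' n') ->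
  round ZA ZB Bisim P n last p q -> round ZA ZB (Pre s) P' n last p q.
Proof.
  intros HP [HA HB]; split.
  - intros n' Hn l p' Hmove.
    destruct (HA n' Hn l p' Hmove) as [q' [Hresp Hcont]].
    exists q'; split; [apply resp_Bisim_Pre | apply HP]; assumption.
  - intros n' Hn l q' Hmove.
    destruct (HB n' Hn l q' Hmove) as [p' [Hresp Hcont]].
    exists p'; split; [apply resp_Bisim_Pre | apply HP]; assumption.
Qed.

Lemma winF_Bisim_Pre k : forall n last p q,
  winF ZA ZB Bisim k n last p q -> winF ZA ZB (Pre s) k n last p q.
Proof.
  induction k as [|k IH]; simpl; auto.
  intros n last p q H; apply (round_Bisim_Pre _ _ _ _ _ _ (fun _ _ _ _ => IH _ _ _ _) H).
Qed.

Lemma winI_Bisim_Pre n p q :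
  winI ZA ZB Bisim n p q -> winI ZA ZB (Pre s) n p q.
Proof.
  intros [W [HW Hinv]]; exists W; split; [exact HW|].
  intros n' last p' q' H; apply (round_Bisim_Pre _ _ _ _ _ _ (fun _ _ _ _ H => H)).
  exact (Hinv _ _ _ _ H).
Qed.

Lemma defender_wins_Bisim_Pre n k p q :
  defender_wins ZA ZB Bisim n k p q -> defender_wins ZA ZB (Pre s) n k p q.
Proof.
  destruct k; simpl; [apply winF_Bisim_Pre | apply winI_Bisim_Pre].
Qed.

End Strategies.

Theorem lemma4 (Act : Type) (A B : TA Act) (ZA : zone_graph A) (ZB : zone_graph B)
  (n k : ninf) (p : state A) (q : state B) :
  admissible n k ->
  defender_wins ZA ZB Bisim n k p q ->
  defender_wins ZA ZB (Pre SA) n k p q /\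
  (defender_wins ZA ZB (Pre SA) n k p q \/ defender_wins ZA ZB (Pre SB) n k p q).
Proof.
  intros _ Hbisim.
  pose proof (defender_wins_Bisim_Pre ZA ZB SA n k p q Hbisim) as Hpre.
  split; [exact Hpre | left; exact Hpre].
Qed.
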